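(* Let $r\ge 1$ and $l\ge 0$ be integers, let $n$ be a positive integer and let $x$ be a real number. Then \[ \sum_{1\le i_1\le i_2\le\cdots\le i_r\le n}(x+i_1)_l=\frac{(x+n+r)_{l+r}}{(l+r)_r}-\sum_{i=1}^r\binom{n+r-i-1}{r-i}\frac{(x+i)_{l+i}}{(l+i)_i}. \]
   Context: $(y)_k=y(y-1)\cdots(y-k+1)$ denotes the lower (falling) factorial, with $(y)_0=1$. The left-hand side is the $r$-fold sum ${\sum}^r (x+n)_l$, where for a function $f$ one sets ${\sum}^0 f(n)=f(n)$ and ${\sum}^r f(n)={\sum}^{r-1}f(1)+\cdots+{\sum}^{r-1}f(n)$. *)

From mathcomp Require Import all_boot all_order all_algebra.
From mathcomp Require Import reals.
Set Implicit Arguments. Unset Strict Implicit. Unset Printing Implicit Defensive.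
Import Order.TTheory GRing.Theory Num.Theory.
Local Open Scope ring_scope.

Definition ffact {R : ringType} (y : R) (k : nat) : R :=
  \prod_(i < k) (y - i%:R).

Fixpoint rsum {R : ringType} (r : nat) (f : nat -> R) (n : nat) : R :=
  match r with
  | 0 => f n
  | r'.+1 => \sum_(1 <= j < n.+1) rsum r' f j
  end.

From mathcomp Require Import all_boot all_order all_algebra.
From mathcomp Require Import reals.
From mathcomp Require Import ring zify.
Import Order.TTheory GRing.Theory Num.Theory.
Local Open Scope ring_scope.

(* The forward difference of (y)_(k+1) is (k+1) (y)_k, so the
   sum over j of the leading term (x+j+r)_(l+r)/(l+r)_r telescopes to the leading
   term for r+1 minus its value at n = 0, which is the new correction term
   i = r+1.  The old correction terms are constant in j, and summing their
   binomial coefficients over j is the hockey-stick identity. *)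

Lemma ffactSl (R : nzRingType) (y : R) k : ffact y k.+1 = y * ffact (y - 1) k.
Proof.
rewrite /ffact big_ord_recl /= subr0; congr (_ * _).
by apply: eq_bigr => i _; rewrite /bump /= natrD opprD addrA.
Qed.

Lemma ffactSr (R : nzRingType) (y : R) k : ffact y k.+1 = ffact y k * (y - k%:R).
Proof. by rewrite /ffact big_ord_recr. Qed.

Lemma ffact_diff (R : comNzRingType) (y : R) k :
  ffact (y + 1) k.+1 - ffact y k.+1 = k.+1%:R * ffact y k.
Proof. by rewrite ffactSl addrK ffactSr -natr1; ring. Qed.

Lemma hockey_stick (k n : nat) : (\sum_(j < n) 'C(j + k, k) = 'C(n + k, k.+1))%N.
Proof.
elim: n => [|n IHn]; first by rewrite big_ord0 bin_small.
by rewrite big_ord_recr /= IHn addSn binS addnC.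
Qed.

Lemma sum_bin_shift (r i n : nat) : (i <= r)%N ->
  (\sum_(1 <= j < n.+1) 'C(j + r - i - 1, r - i) =
   'C(n + r.+1 - i - 1, r.+1 - i))%N.
Proof.
move=> le_ir; rewrite big_add1 /= big_mkord.
rewrite (eq_bigr (fun j : 'I_n => 'C(j + (r - i), r - i))); last first.
  by move=> j _; congr binomial; lia.
by rewrite hockey_stick; congr binomial; lia.
Qed.

Section FfactRatio.

Variables (R : numFieldType) (l : nat).

(* (y)_(l+r) / (l+r)_r: the leading term of the closed form is
   [ffact_ratio r (x+n+r)] and its i-th correction term is [ffact_ratio i (x+i)]. *)
Definition ffact_ratio (r : nat) (y : R) : R :=
  ffact y (l + r) / ffact (l + r)%:R r.

Lemma ffact_ratio_diff r y :
  ffact_ratio r.+1 (y + 1) - ffact_ratio r.+1 y = ffact_ratio r y.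
Proof.
rewrite /ffact_ratio -mulrBl addnS ffact_diff ffactSl -natr1 addrK.
have lr1_neq0 : (l + r).+1%:R != 0 :> R by rewrite pnatr_eq0.
by rewrite natr1 invfM mulrACA mulfV // mul1r.
Qed.

Lemma sum_ffact_ratio r c n :
  \sum_(1 <= j < n.+1) ffact_ratio r (c + j%:R) =
  ffact_ratio r.+1 (c + n.+1%:R) - ffact_ratio r.+1 (c + 1).
Proof.
apply: (telescope_sumr_eq (fun k => ffact_ratio r.+1 (c + k%:R))) => // k _.
by rewrite -natr1 addrA ffact_ratio_diff.
Qed.

Lemma rsum_ffact (x : R) r n :
  rsum r (fun m => ffact (x + m%:R) l) n =
    ffact_ratio r (x + n%:R + r%:R)
    - \sum_(1 <= i < r.+1) 'C(n + r - i - 1, r - i)%:R * ffact_ratio i (x + i%:R).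
Proof.
elim: r n => [|r IHr] n.
  by rewrite big_geq // subr0 addr0 /ffact_ratio addn0 /ffact big_ord0 divr1.
rewrite /= (eq_bigr _ (fun j _ => IHr j)) sumrB exchange_big /=.
have sum_leading : \sum_(1 <= j < n.+1) ffact_ratio r (x + j%:R + r%:R) =
    ffact_ratio r.+1 (x + n%:R + r.+1%:R) - ffact_ratio r.+1 (x + r.+1%:R).
  rewrite (eq_bigr (fun j => ffact_ratio r (x + r%:R + j%:R))) => [|j _].
    rewrite sum_ffact_ratio -!natr1; congr (ffact_ratio _ _ - ffact_ratio _ _).
      by ring.
    by rewrite addrA.
  by rewrite addrAC.
have sum_corrections :
    \sum_(1 <= i < r.+1) \sum_(1 <= j < n.+1)
      'C(j + r - i - 1, r - i)%:R * ffact_ratio i (x + i%:R) =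
    \sum_(1 <= i < r.+1) 'C(n + r.+1 - i - 1, r.+1 - i)%:R * ffact_ratio i (x + i%:R).
  apply: eq_big_nat => i /andP[_ lt_ir].
  by rewrite -mulr_suml -natr_sum sum_bin_shift.
rewrite sum_leading sum_corrections [in RHS]big_nat_recr //= subnn bin0 mul1r.
by rewrite opprD addrA addrAC.
Qed.

End FfactRatio.

(* The identity holds for all r and n. *)
Theorem mainTheorem2 (R : realType) (r l n : nat) (x : R) :
  (1 <= r)%N -> (0 < n)%N ->
  rsum r (fun m => ffact (x + m%:R) l) n =
    ffact (x + n%:R + r%:R) (l + r) / ffact ((l + r)%:R) r
    - \sum_(1 <= i < r.+1)
        ('C(n + r - i - 1, r - i))%:R * (ffact (x + i%:R) (l + i) / ffact ((l + i)%:R) i).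
Proof. by move=> _ _; exact: rsum_ffact. Qed.
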